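(* Let $(X,d)$ be a compact metric space and let $f_{1,\infty}=(f_n)_{n=1}^\infty$ be a sequence of continuous maps $f_n:X\to X$ which is either finitely generated or converges uniformly to a map $f:X\to X$. Then for every $k\in\mathbb{N}$, $(X,f_{1,\infty})$ is Kato chaotic if and only if its $k$-th iterate $(X,f_{1,\infty}^{[k]})$ is Kato chaotic.
   Context: For $i,n\in\mathbb{N}$ write $f_i^n=f_{i+n-1}\circ\cdots\circ f_i$, $f_i^0=\mathrm{id}_X$. The $k$-th iterate is $f_{1,\infty}^{[k]}=(f_{k(n-1)+1}^k)_{n=1}^\infty$, whose $n$-fold composition from index $1$ is $f_1^{kn}$. The system $f_{1,\infty}$ is finitely generated if there is a finite set $F$ of continuous self-maps of $X$ with $f_i\in F$ for all $i$. A non-autonomous system $g_{1,\infty}$ (compositions $g_1^n$) is sensitive if there is $\delta>0$ such that for every nonempty open $U\subseteq X$ there exist $x,y\in U$ and $n\in\mathbb{N}$ with $d(g_1^n(x),g_1^n(y))>\delta$; it is accessible if for every $\varepsilon>0$ and all nonempty open $U,V\subseteq X$ there exist $x\in U$, $y\in V$, $n\in\mathbb{N}$ with $d(g_1^n(x),g_1^n(y))<\varepsilon$; it is Kato chaotic if it is sensitive and accessible. *)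

From Stdlib Require Import Reals Lra Lia.
Open Scope R_scope.

Definition is_metric {X : Type} (d : X -> X -> R) : Prop :=
  (forall x y, 0 <= d x y) /\
  (forall x y, d x y = 0 <-> x = y) /\
  (forall x y, d x y = d y x) /\
  (forall x y z, d x z <= d x y + d y z).

Definition open_in {X : Type} (d : X -> X -> R) (U : X -> Prop) : Prop :=
  forall x, U x -> exists r, 0 < r /\ forall y, d x y < r -> U y.

Definition compact_space {X : Type} (d : X -> X -> R) : Prop :=
  forall (I : Type) (U : I -> X -> Prop),
    (forall i, open_in d (U i)) ->
    (forall x, exists i, U i x) ->
    exists l : list I, forall x, exists i, List.In i l /\ U i x.

Definition continuous_map {X : Type} (d : X -> X -> R) (g : X -> X) : Prop :=
  forall x eps, 0 < eps -> exists delta, 0 < delta /\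
    forall y, d x y < delta -> d (g x) (g y) < eps.

(* f_i^n = f_{i+n-1} o ... o f_i, f_i^0 = id.  Sequences are indexed from 1;
   the value f 0 is never used by the notions below. *)
Fixpoint comp {X : Type} (f : nat -> X -> X) (i n : nat) (x : X) : X :=
  match n with
  | O => x
  | S m => f (i + m)%nat (comp f i m x)
  end.

Definition kth_iterate {X : Type} (f : nat -> X -> X) (k : nat) : nat -> X -> X :=
  fun n => comp f (k * (n - 1) + 1)%nat k.

Definition nonempty_open {X : Type} (d : X -> X -> R) (U : X -> Prop) : Prop :=
  open_in d U /\ exists x, U x.

Definition sensitive {X : Type} (d : X -> X -> R) (g : nat -> X -> X) : Prop :=
  exists delta, 0 < delta /\
    forall U, nonempty_open d U ->
      exists x y n, U x /\ U y /\ (1 <= n)%nat /\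
        d (comp g 1 n x) (comp g 1 n y) > delta.

Definition accessible {X : Type} (d : X -> X -> R) (g : nat -> X -> X) : Prop :=
  forall eps U V, 0 < eps -> nonempty_open d U -> nonempty_open d V ->
    exists x y n, U x /\ V y /\ (1 <= n)%nat /\
      d (comp g 1 n x) (comp g 1 n y) < eps.

Definition kato_chaotic {X : Type} (d : X -> X -> R) (g : nat -> X -> X) : Prop :=
  sensitive d g /\ accessible d g.

Definition finitely_generated {X : Type} (d : X -> X -> R) (f : nat -> X -> X) : Prop :=
  exists F : list (X -> X),
    (forall h, List.In h F -> continuous_map d h) /\
    (forall i, (1 <= i)%nat -> List.In (f i) F).

Definition unif_conv {X : Type} (d : X -> X -> R) (f : nat -> X -> X) (g : X -> X) : Prop :=
  forall eps, 0 < eps -> exists N, forall n x, (N <= n)%nat -> d (f n x) (g x) < eps.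

(* Blocks f_i^j of bounded length j <= k are uniformly equicontinuous: a finitely
   generated family consists of finitely many uniformly continuous maps, and a
   uniformly convergent one is uniformly Cauchy, hence eventually as equicontinuous
   as a single f_N.  Since g_1^n = f_1^(kn), sensitivity and accessibility of the
   iterate give those of f at the times kn.  Conversely, write a time m as kq + s
   with s < k.  If f separates x and y by delta at time m, equicontinuity of the
   remaining block of length s forces a separation of at least eta at time kq, and
   q > 0 once x and y are eta-close.  If f brings x and y eta-close at time m, the
   block of length k - s keeps them eps-close until time k(q + 1). *)
From Pilot Require Import Defs.
From Stdlib Require Import Reals Lra Lia List.
Open Scope R_scope.

(* Qualified because [Reals] exports its own [comp] on real functions. *)

Lemma comp_add {X : Type} (f : nat -> X -> X) (i a b : nat) (x : X) :
  Defs.comp f i (a + b)%nat x = Defs.comp f (i + a)%nat b (Defs.comp f i a x).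
Proof.
  induction b as [|b IH]; simpl.
  - now rewrite Nat.add_0_r.
  - rewrite Nat.add_succ_r; simpl. rewrite IH. f_equal. lia.
Qed.

Lemma comp_kth_iterate {X : Type} (f : nat -> X -> X) (k n : nat) (x : X) :
  Defs.comp (kth_iterate f k) 1 n x = Defs.comp f 1 (k * n)%nat x.
Proof.
  induction n as [|n IH]; simpl.
  - now rewrite Nat.mul_0_r.
  - rewrite IH. unfold kth_iterate.
    replace (k * S n)%nat with (k * n + k)%nat by lia.
    rewrite comp_add. replace (S n - 1)%nat with n by lia. f_equal. lia.
Qed.

Lemma common_positive_bound {A : Type} (P : A -> R -> Prop) (l : list A) :
  (forall a eta eta', 0 < eta' <= eta -> P a eta -> P a eta') ->
  (forall a, In a l -> exists eta, 0 < eta /\ P a eta) ->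
  exists eta, 0 < eta /\ forall a, In a l -> P a eta.
Proof.
  intros Hmono Hl. induction l as [|a l IH].
  - exists 1. split; [lra | intros ? []].
  - destruct (Hl a (or_introl eq_refl)) as [e1 [He1 Pa]].
    destruct IH as [e2 [He2 Pl]]; [intros b Hb; apply Hl; now right|].
    assert (Hmin : 0 < Rmin e1 e2) by now apply Rmin_pos.
    exists (Rmin e1 e2). split; [exact Hmin|].
    intros b [-> | Hb].
    + apply (Hmono b e1); [split; [exact Hmin | apply Rmin_l] | exact Pa].
    + apply (Hmono b e2); [split; [exact Hmin | apply Rmin_r] | now apply Pl].
Qed.

Section MetricSpace.

Context {X : Type} (d : X -> X -> R).
Hypothesis d_metric : is_metric d.

Lemma dist_self (x : X) : d x x = 0.
Proof. now apply d_metric. Qed.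

Lemma dist_sym (x y : X) : d x y = d y x.
Proof. apply d_metric. Qed.

Lemma dist_triangle (x y z : X) : d x z <= d x y + d y z.
Proof. apply d_metric. Qed.

Lemma ball_open (x : X) (r : R) : open_in d (fun y => d x y < r).
Proof.
  intros y Hy. exists (r - d x y). split; [lra|].
  intros z Hz. pose proof (dist_triangle x y z). lra.
Qed.

Lemma ball_nonempty_open (x : X) (r : R) :
  0 < r -> nonempty_open d (fun y => d x y < r).
Proof.
  intros Hr. split; [apply ball_open|]. exists x. now rewrite dist_self.
Qed.

(* The balls B(x, r/2) for which h maps B(x, r) into B(h x, eps/2) cover X;
   a lower bound of the radii of a finite subcover is a modulus for eps. *)
Lemma compact_uniformly_continuous (h : X -> X) :
  compact_space d -> continuous_map d h ->
  forall eps, 0 < eps -> exists eta, 0 < eta /\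
    forall a b, d a b < eta -> d (h a) (h b) < eps.
Proof.
  intros Hcomp Hh eps Heps.
  set (I := {p : X * R | 0 < snd p /\
              forall z, d (fst p) z < snd p -> d (h (fst p)) (h z) < eps / 2}).
  destruct (Hcomp I (fun p y => d (fst (proj1_sig p)) y < snd (proj1_sig p) / 2))
    as [l Hl].
  - intros p. apply ball_open.
  - intros y. destruct (Hh y (eps / 2)) as [r [Hr Hy]]; [lra|].
    exists (exist _ (y, r) (conj Hr Hy)). simpl. rewrite dist_self. lra.
  - destruct (common_positive_bound
                (fun p eta => eta <= snd (proj1_sig p) / 2) l) as [eta [Heta Hle]].
    + intros p e e' He Hp. lra.
    + intros [[x r] [Hr Hx]] _. exists (r / 2). simpl in *. split; lra.
    + exists eta. split; [exact Heta|]. intros a b Hab.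
      destruct (Hl a) as [[[x r] [Hr Hx]] [Hin Ha]].
      specialize (Hle _ Hin). simpl in Hle, Hr, Hx, Ha.
      pose proof (dist_triangle x a b).
      pose proof (Hx a ltac:(lra)). pose proof (Hx b ltac:(lra)).
      pose proof (dist_triangle (h a) (h x) (h b)).
      rewrite (dist_sym (h a) (h x)) in *. lra.
Qed.

Lemma finite_family_equicontinuous (F : list (X -> X)) :
  compact_space d -> (forall h, In h F -> continuous_map d h) ->
  forall eps, 0 < eps -> exists eta, 0 < eta /\
    forall h a b, In h F -> d a b < eta -> d (h a) (h b) < eps.
Proof.
  intros Hcomp HF eps Heps.
  destruct (common_positive_bound
              (fun h eta => forall a b, d a b < eta -> d (h a) (h b) < eps) F)
    as [eta [Heta Hmod]].
  - intros h e e' He Hh a b Hab. apply Hh. lra.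
  - intros h Hin. apply compact_uniformly_continuous; auto.
  - exists eta. split; [exact Heta|]. intros h a b Hin. now apply Hmod.
Qed.

Definition equicontinuous (f : nat -> X -> X) : Prop :=
  forall eps, 0 < eps -> exists eta, 0 < eta /\
    forall i a b, (1 <= i)%nat -> d a b < eta -> d (f i a) (f i b) < eps.

Lemma finitely_generated_equicontinuous (f : nat -> X -> X) :
  compact_space d -> finitely_generated d f -> equicontinuous f.
Proof.
  intros Hcomp [F [HF Hf]] eps Heps.
  destruct (finite_family_equicontinuous F Hcomp HF eps Heps) as [eta [Heta Hmod]].
  exists eta. split; [exact Heta|]. intros i a b Hi. now apply Hmod, Hf.
Qed.

Lemma unif_conv_cauchy (f : nat -> X -> X) (g : X -> X) :
  unif_conv d f g -> forall eps, 0 < eps -> exists N,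
    forall i j x, (N <= i)%nat -> (N <= j)%nat -> d (f i x) (f j x) < eps.
Proof.
  intros Hg eps Heps. destruct (Hg (eps / 2)) as [N HN]; [lra|].
  exists N. intros i j x Hi Hj.
  pose proof (HN i x Hi). pose proof (HN j x Hj).
  pose proof (dist_triangle (f i x) (g x) (f j x)).
  rewrite (dist_sym (g x)) in *. lra.
Qed.

Lemma unif_conv_equicontinuous (f : nat -> X -> X) (g : X -> X) :
  compact_space d -> (forall n, (1 <= n)%nat -> continuous_map d (f n)) ->
  unif_conv d f g -> equicontinuous f.
Proof.
  intros Hcomp Hf Hg eps Heps.
  destruct (unif_conv_cauchy f g Hg (eps / 3)) as [N HN]; [lra|].
  destruct (finite_family_equicontinuous (map f (seq 1 (S N))) Hcomp)
    with (eps := eps / 3) as [eta [Heta Hmod]].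
  - intros h Hh. apply in_map_iff in Hh as [n [<- Hn]].
    apply in_seq in Hn. apply Hf. lia.
  - lra.
  - exists eta. split; [exact Heta|]. intros i a b Hi Hab.
    assert (Hinit : forall n, (1 <= n <= S N)%nat -> d (f n a) (f n b) < eps / 3).
    { intros n Hn. apply Hmod; [apply in_map, in_seq; lia | exact Hab]. }
    destruct (Nat.le_gt_cases i (S N)) as [Hle | Hgt].
    + pose proof (Hinit i ltac:(lia)). lra.
    + pose proof (Hinit (S N) ltac:(lia)).
      pose proof (HN i (S N) a ltac:(lia) ltac:(lia)).
      pose proof (HN (S N) i b ltac:(lia) ltac:(lia)).
      pose proof (dist_triangle (f i a) (f (S N) a) (f i b)).
      pose proof (dist_triangle (f (S N) a) (f (S N) b) (f i b)).
      lra.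
Qed.

Lemma equicontinuous_comp_le (f : nat -> X -> X) (K : nat) :
  equicontinuous f -> forall eps, 0 < eps -> exists eta, 0 < eta /\
    forall i j a b, (1 <= i)%nat -> (j <= K)%nat -> d a b < eta ->
      d (Defs.comp f i j a) (Defs.comp f i j b) < eps.
Proof.
  intros Hf. induction K as [|K IH]; intros eps Heps.
  - exists eps. split; [exact Heps|].
    intros i j a b _ Hj Hab. now replace j with 0%nat by lia.
  - destruct (Hf eps Heps) as [e1 [He1 Hstep]].
    destruct (IH (Rmin eps e1)) as [eta [Heta Hblock]]; [now apply Rmin_pos|].
    exists eta. split; [exact Heta|].
    intros i j a b Hi Hj Hab. apply Nat.le_succ_r in Hj as [Hj | ->].
    + eapply Rlt_le_trans; [now apply Hblock | apply Rmin_l].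
    + simpl. apply Hstep; [lia|].
      eapply Rlt_le_trans; [now apply Hblock | apply Rmin_r].
Qed.

Lemma sensitive_kth_iterate (f : nat -> X -> X) (k : nat) :
  equicontinuous f -> (1 <= k)%nat ->
  sensitive d f -> sensitive d (kth_iterate f k).
Proof.
  intros Hf Hk [delta [Hdelta Hsens]].
  destruct (equicontinuous_comp_le f k Hf delta Hdelta) as [eta [Heta Hblock]].
  exists (eta / 2). split; [lra|].
  intros U [HU [x0 Hx0]]. destruct (HU x0 Hx0) as [r [Hr Hball]].
  assert (Hrad : 0 < Rmin r (eta / 2)) by (apply Rmin_pos; lra).
  pose proof (Rmin_l r (eta / 2)). pose proof (Rmin_r r (eta / 2)).
  destruct (Hsens _ (ball_nonempty_open x0 _ Hrad)) as [x [y [m [Hx [Hy [_ Hsep]]]]]].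
  assert (Hxy : d x y < eta).
  { pose proof (dist_triangle x x0 y). rewrite (dist_sym x x0) in *. lra. }
  rewrite (Nat.div_mod_eq m k), comp_add, comp_add in Hsep.
  assert (Hs : (m mod k <= k)%nat) by (pose proof (Nat.mod_upper_bound m k); lia).
  set (q := (m / k)%nat) in *.
  assert (Hfar : eta <= d (Defs.comp f 1 (k * q) x) (Defs.comp f 1 (k * q) y)).
  { apply Rnot_lt_le. intros Hclose.
    pose proof (Hblock (1 + k * q)%nat _ _ _ ltac:(lia) Hs Hclose). lra. }
  assert (Hq : q <> 0%nat).
  { intros Hq0. rewrite Hq0, Nat.mul_0_r in Hfar. simpl in Hfar. lra. }
  exists x, y, q. repeat split; [apply Hball; lra | apply Hball; lra | lia |].
  rewrite !comp_kth_iterate. lra.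
Qed.

Lemma accessible_kth_iterate (f : nat -> X -> X) (k : nat) :
  equicontinuous f -> (1 <= k)%nat ->
  accessible d f -> accessible d (kth_iterate f k).
Proof.
  intros Hf Hk Hacc eps U V Heps HU HV.
  destruct (equicontinuous_comp_le f k Hf eps Heps) as [eta [Heta Hblock]].
  destruct (Hacc eta U V Heta HU HV) as [x [y [m [Hx [Hy [_ Hclose]]]]]].
  pose proof (Nat.div_mod_eq m k). pose proof (Nat.mod_upper_bound m k).
  exists x, y, (S (m / k)). repeat split; [exact Hx | exact Hy | lia |].
  rewrite !comp_kth_iterate.
  replace (k * S (m / k))%nat with (m + (k - m mod k))%nat by lia.
  rewrite !comp_add. apply Hblock; [lia | lia | exact Hclose].
Qed.

Lemma sensitive_of_kth_iterate (f : nat -> X -> X) (k : nat) :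
  (1 <= k)%nat -> sensitive d (kth_iterate f k) -> sensitive d f.
Proof.
  intros Hk [delta [Hdelta Hsens]]. exists delta. split; [exact Hdelta|].
  intros U HU. destruct (Hsens U HU) as [x [y [n [Hx [Hy [Hn Hsep]]]]]].
  rewrite !comp_kth_iterate in Hsep.
  exists x, y, (k * n)%nat. repeat split; auto. lia.
Qed.

Lemma accessible_of_kth_iterate (f : nat -> X -> X) (k : nat) :
  (1 <= k)%nat -> accessible d (kth_iterate f k) -> accessible d f.
Proof.
  intros Hk Hacc eps U V Heps HU HV.
  destruct (Hacc eps U V Heps HU HV) as [x [y [n [Hx [Hy [Hn Hclose]]]]]].
  rewrite !comp_kth_iterate in Hclose.
  exists x, y, (k * n)%nat. repeat split; auto. lia.
Qed.

End MetricSpace.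

Theorem mainTheorem3 (X : Type) (d : X -> X -> R) (f : nat -> X -> X) :
  is_metric d ->
  compact_space d ->
  (forall n, (1 <= n)%nat -> continuous_map d (f n)) ->
  (finitely_generated d f \/ exists g : X -> X, unif_conv d f g) ->
  forall k : nat, (1 <= k)%nat ->
    (kato_chaotic d f <-> kato_chaotic d (kth_iterate f k)).
Proof.
  intros Hd Hcomp Hcont Hgen k Hk.
  assert (Hequi : equicontinuous d f).
  { destruct Hgen as [Hfin | [g Hg]].
    - now apply finitely_generated_equicontinuous.
    - now apply (unif_conv_equicontinuous d Hd f g). }
  split; intros [Hsens Hacc]; split.
  - now apply sensitive_kth_iterate.
  - now apply accessible_kth_iterate.
  - now apply (sensitive_of_kth_iterate d f k).
  - now apply (accessible_of_kth_iterate d f k).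
Qed.
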